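(* Let $\alpha\in(0,1/2)$. For every non-degenerate real random variable $X$ with $E|X|<\infty$, $$-1+2\alpha < \tilde{s}_2(\alpha) < 1-2\alpha .$$ Moreover, both bounds are sharp: $\sup_X \tilde{s}_2(\alpha)=1-2\alpha$ and $\inf_X \tilde{s}_2(\alpha)=-1+2\alpha$, where the supremum and infimum range over all non-degenerate random variables $X$ with finite mean.
   Context: For a random variable $X$ with $E|X|<\infty$ and $\tau\in(0,1)$, the $\tau$-expectile $e_X(\tau)$ is the unique real number $t$ satisfying $\tau\, E(X-t)_+ = (1-\tau)\, E(X-t)_-$, where $x_+=\max\{x,0\}$ and $x_-=\max\{-x,0\}$. In particular $e_X(1/2)=\mu:=EX$. For $\alpha\in(0,1/2)$, the expectile skewness is $$\tilde{s}_2(\alpha) = \frac{e_X(1-\alpha)+e_X(\alpha)-2\mu}{e_X(1-\alpha)-e_X(\alpha)}.$$ (For non-degenerate $X$, $e_X(\alpha)<\mu<e_X(1-\alpha)$, so this is well defined.) *)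

From HB Require Import structures.
From mathcomp Require Import all_boot all_order all_algebra.
From mathcomp Require Import all_classical all_reals all_analysis.
Set Implicit Arguments. Unset Strict Implicit. Unset Printing Implicit Defensive.
Import Order.TTheory GRing.Theory Num.Theory.
Local Open Scope classical_set_scope.
Local Open Scope ring_scope.

Definition mean {d} {T : measurableType d} {R : realType}
  (P : probability T R) (X : T -> R) : R :=
  fine (\int[P]_x (X x)%:E)%E.

Definition expectile_eq {d} {T : measurableType d} {R : realType}
  (P : probability T R) (X : T -> R) (tau t : R) : Prop :=
  ((tau%:E * \int[P]_x (Num.max (X x - t) 0)%:E) =
   ((1 - tau)%:E * \int[P]_x (Num.max (- (X x - t)) 0)%:E))%E.

Definition expectile {d} {T : measurableType d} {R : realType}
  (P : probability T R) (X : T -> R) (tau : R) : R :=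
  xget 0 [set t : R | expectile_eq P X tau t].

Definition expectile_skew {d} {T : measurableType d} {R : realType}
  (P : probability T R) (X : T -> R) (alpha : R) : R :=
  (expectile P X (1 - alpha) + expectile P X alpha - 2 * mean P X) /
  (expectile P X (1 - alpha) - expectile P X alpha).

Definition rv_nondegenerate {d} {T : measurableType d} {R : realType}
  (P : probability T R) (X : T -> R) : Prop :=
  ~ (exists c : R, P [set x | X x = c] = 1%E).

From HB Require Import structures.
From mathcomp Require Import all_boot all_order all_algebra.
From mathcomp Require Import all_classical all_reals all_analysis.
From mathcomp Require Import measurable_realfun ring lra.
Import Order.TTheory GRing.Theory Num.Theory.
Import numFieldNormedType.Exports.
Local Open Scope classical_set_scope.
Local Open Scope ring_scope.
Set Implicit Arguments.
Unset Strict Implicit.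

(* Write pi+(t) = E(X - t)_+ and pi-(t) = E(X - t)_-.  Then
   pi+(t) - pi-(t) = mu - t, pi+ is non-increasing and pi- non-decreasing,
   strictly so where they are positive, and e_X(tau) is the unique root of
   tau pi+ - (1 - tau) pi-.  For u = e_X(1 - alpha) and l = e_X(alpha) the
   expectile equations give
     alpha (u - mu) = (1 - 2 alpha) pi+(u),
     (1 - alpha) (mu - l) = (1 - 2 alpha) pi+(l),
   so pi+(u) < pi+(l) yields alpha (u - mu) < (1 - alpha) (mu - l), and with
   pi- in place of pi+ also alpha (mu - l) < (1 - alpha) (u - mu).  These two
   inequalities are the two bounds on
     s = ((u - mu) - (mu - l)) / ((u - mu) + (mu - l)).
   A Bernoulli(p) variable has s = (1 - 2 alpha)(1 - 2 p), which tends to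
   1 - 2 alpha as p -> 0 and to -1 + 2 alpha as p -> 1. *)

Lemma maxr0_subN (R : realDomainType) (a : R) :
  Num.max a 0 - Num.max (- a) 0 = a.
Proof. by have [] := lerP 0 a; have [] := lerP 0 (- a); lra. Qed.

Lemma maxr0_addN (R : realDomainType) (a : R) :
  Num.max a 0 + Num.max (- a) 0 = `|a|.
Proof.
have [a0|a0] := lerP 0 a; [rewrite ger0_norm // | rewrite ltr0_norm //].
all: by have [] := lerP 0 (- a); lra.
Qed.

Lemma maxr0_eq_lt_eq0 (R : realDomainType) (a b : R) : a < b ->
  Num.max a 0 = Num.max b 0 -> Num.max a 0 = 0.
Proof. by move=> ab; have [] := lerP 0 a; have [] := lerP 0 b; lra. Qed.

Lemma lipschitz1_continuous (R : realFieldType) (f : R -> R) :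
  (forall s t, `|f s - f t| <= `|s - t|) -> continuous f.
Proof.
move=> f_lip x; apply/cvgrPdist_lt => e e0; near=> y.
by apply: le_lt_trans (f_lip x y) _; near: y; apply: cvgr_dist_lt.
Unshelve. all: by end_near. Qed.

Lemma skew_ratio_bounds (R : realFieldType) (a x y : R) : 0 < x + y ->
  a * x < (1 - a) * y -> a * y < (1 - a) * x ->
  -1 + 2 * a < (x - y) / (x + y) < 1 - 2 * a.
Proof.
by move=> xy0 hx hy; rewrite ltr_pdivlMr // ltr_pdivrMr //; apply/andP; split; lra.
Qed.

Section integral_ae.
Context d (T : measurableType d) (R : realType) (mu : {measure set T -> \bar R}).

Lemma integrable_subr (f g : T -> R) :
  mu.-integrable setT (EFin \o f) -> mu.-integrable setT (EFin \o g) ->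
  mu.-integrable setT (EFin \o (f \- g)).
Proof.
by move=> fi gi; apply: eq_integrable (integrableB measurableT fi gi).
Qed.

Lemma integrable_le (f g : T -> R) : measurable_fun setT f ->
  (forall x, `|f x| <= `|g x|) -> mu.-integrable setT (EFin \o g) ->
  mu.-integrable setT (EFin \o f).
Proof.
move=> mf fg gi; apply: le_integrable gi => //; first exact/measurable_EFinP.
by move=> x _ /=; rewrite lee_fin fg.
Qed.

Lemma Rintegral_ge0_eq0 (f : T -> R) : mu.-integrable setT (EFin \o f) ->
  (forall x, 0 <= f x) -> \int[mu]_x f x = 0 -> {ae mu, forall x, f x = 0}.
Proof.
move=> fi f0 intf0; have /integrableP[mf _] := fi.
have : (\int[mu]_x `|(f x)%:E|)%E = 0%E.
  rewrite -[RHS]/(0%:E) -intf0 fineK; last exact: integrable_fin_num.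
  by apply: eq_integral => x _; rewrite gee0_abs // lee_fin.
move/(ae_eq_integral_abs mu measurableT mf).
by apply: filterS => x /(_ I) [].
Qed.

Lemma Rintegral_ae_eq0 (f : T -> R) : measurable_fun setT f ->
  {ae mu, forall x, f x = 0} -> \int[mu]_x f x = 0.
Proof.
move=> mf f0; rewrite /Rintegral (ae_eq_integral (cst 0%E)) //=.
- by rewrite integral0.
- exact/measurable_EFinP.
- by apply: filterS f0 => x /= ->.
Qed.

Lemma lt_Rintegral (f g : T -> R) :
  mu.-integrable setT (EFin \o f) -> mu.-integrable setT (EFin \o g) ->
  (forall x, g x <= f x) -> (forall x, g x = f x -> g x = 0) ->
  \int[mu]_x g x != 0 -> \int[mu]_x g x < \int[mu]_x f x.
Proof.
move=> fi gi gf eq_g0 intg0; rewrite lt_def le_Rintegral // andbT.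
apply: contra intg0 => /eqP intfg.
have : {ae mu, forall x, (f \- g) x = 0}.
  apply: Rintegral_ge0_eq0; first exact: integrable_subr.
    by move=> x; rewrite subr_ge0.
  by rewrite RintegralB // intfg subrr.
have /integrableP[/measurable_EFinP mg _] := gi.
move=> fg0; apply/eqP/Rintegral_ae_eq0 => //; apply: filterS fg0 => x /= /eqP.
by rewrite subr_eq0 => /eqP/esym/eq_g0.
Qed.

End integral_ae.

Lemma ae_probability1 d (T : measurableType d) (R : realType)
    (P : probability T R) (A : set T) :
  measurable A -> {ae P, forall x, A x} -> P A = 1%E.
Proof.
move=> mA [N [mN PN0 AN]]; apply/eqP; rewrite eq_le probability_le1 //=.
have <- : P (~` N) = 1%E by rewrite probability_setC // PN0 sube0.
apply: le_measure; rewrite ?inE //; first exact: measurableC.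
by move=> x Nx; apply: contrapT => Ax; exact: Nx (AN x Ax).
Qed.

Section partial_moments.
Context d (T : measurableType d) (R : realType) (P : probability T R) (X : T -> R).
Hypothesis X_int : P.-integrable setT (EFin \o X).

Definition Epos t := \int[P]_x Num.max (X x - t) 0.
Definition Eneg t := \int[P]_x Num.max (- (X x - t)) 0.

Let mX : measurable_fun setT X.
Proof. by have /integrableP[/measurable_EFinP] := X_int. Qed.

Let Rintegral_cst_prob (c : R) : \int[P]_x c = c.
Proof. by rewrite Rintegral_cst // /= probability_setT mulr1. Qed.

Let X_sub_int t : P.-integrable setT (EFin \o (fun x => X x - t)).
Proof.
exact: (integrable_subr X_int (finite_measure_integrable_cst P t measurableT)).
Qed.

Let Xpos_int t : P.-integrable setT (EFin \o (fun x => Num.max (X x - t) 0)).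
Proof.
apply: integrable_le (X_sub_int t) => [|x].
  by apply: (measurable_maxr (g := cst 0)) => //; exact: measurable_funB.
by rewrite ger0_norm ?le_max ?lexx ?orbT // ge_max normr_ge0 ler_norm.
Qed.

Let Xneg_int t : P.-integrable setT (EFin \o (fun x => Num.max (- (X x - t)) 0)).
Proof.
apply: integrable_le (X_sub_int t) => [|x].
  apply: (measurable_maxr (g := cst 0)) => //.
  by apply: measurableT_comp => //; exact: measurable_funB.
by rewrite ger0_norm ?le_max ?lexx ?orbT // ge_max normr_ge0 -normrN ler_norm.
Qed.

Lemma Epos_ge0 t : 0 <= Epos t.
Proof. by apply: Rintegral_ge0 => x _; rewrite le_max lexx orbT. Qed.

Lemma Eneg_ge0 t : 0 <= Eneg t.
Proof. by apply: Rintegral_ge0 => x _; rewrite le_max lexx orbT. Qed.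

Lemma EposE t : (\int[P]_x (Num.max (X x - t) 0)%:E)%E = (Epos t)%:E.
Proof. by rewrite fineK //; exact: integrable_fin_num (Xpos_int t). Qed.

Lemma EnegE t : (\int[P]_x (Num.max (- (X x - t)) 0)%:E)%E = (Eneg t)%:E.
Proof. by rewrite fineK //; exact: integrable_fin_num (Xneg_int t). Qed.

Lemma Epos_subEneg t : Epos t - Eneg t = mean P X - t.
Proof.
rewrite -RintegralB // -[t in RHS]Rintegral_cst_prob -RintegralB //.
  by apply: eq_Rintegral => x _; rewrite maxr0_subN.
exact: finite_measure_integrable_cst.
Qed.

Lemma Epos_addEneg t : Epos t + Eneg t = \int[P]_x `|X x - t|.
Proof.
by rewrite -RintegralD //; apply: eq_Rintegral => x _; rewrite maxr0_addN.
Qed.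

Lemma Epos_nonincr s t : s <= t -> Epos t <= Epos s.
Proof.
by move=> st; apply: le_Rintegral => // x _; rewrite le_max2 // lerD2l lerN2.
Qed.

Lemma Eneg_nondecr s t : s <= t -> Eneg s <= Eneg t.
Proof.
by move=> st; apply: le_Rintegral => // x _; rewrite le_max2 // lerN2 lerD2l lerN2.
Qed.

Lemma Epos_decr s t : s < t -> 0 < Epos t -> Epos t < Epos s.
Proof.
move=> st Et0; apply: lt_Rintegral => // [x|x|]; last exact: lt0r_neq0.
- by rewrite le_max2 // lerD2l lerN2 ltW.
- by apply: maxr0_eq_lt_eq0; rewrite ltrD2l ltrN2.
Qed.

Lemma Eneg_incr s t : s < t -> 0 < Eneg s -> Eneg s < Eneg t.
Proof.
move=> st Es0; apply: lt_Rintegral => // [x|x|]; last exact: lt0r_neq0.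
- by rewrite le_max2 // lerN2 lerD2l lerN2 ltW.
- by apply: maxr0_eq_lt_eq0; rewrite ltrN2 ltrD2l ltrN2.
Qed.

Lemma Epos_addEneg_gt0 t : rv_nondegenerate P X -> 0 < Epos t + Eneg t.
Proof.
move=> ndX; rewrite lt_def addr_ge0 ?Epos_ge0 ?Eneg_ge0 // andbT.
apply: contra_notN ndX => /eqP; rewrite Epos_addEneg => abs0; exists t.
apply: ae_probability1.
  by have := mX measurableT (measurable_set1 t); rewrite setTI.
apply: filterS (Rintegral_ge0_eq0 _ _ abs0) => [x /eqP||].
- by rewrite normr_eq0 subr_eq0 => /eqP.
- apply: integrable_le (X_sub_int t) => [|x]; last by rewrite normr_id.
  by apply: measurableT_comp => //; exact: measurable_funB.
- by move=> x; exact: normr_ge0.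
Qed.

Definition expectile_gap tau t := tau * Epos t - (1 - tau) * Eneg t.

Lemma expectile_eqP tau t : expectile_eq P X tau t <-> expectile_gap tau t = 0.
Proof.
rewrite /expectile_eq EposE EnegE -!EFinM /expectile_gap.
by split => [[->]|/eqP]; [rewrite subrr | rewrite subr_eq0 => /eqP ->].
Qed.

Lemma Epos_Eneg_increments s t : s <= t ->
  [/\ 0 <= Epos s - Epos t, 0 <= Eneg t - Eneg s
    & (Epos s - Epos t) + (Eneg t - Eneg s) = t - s].
Proof.
move=> st; rewrite !subr_ge0 Epos_nonincr ?Eneg_nondecr //; split => //.
by have := Epos_subEneg s; have := Epos_subEneg t; lra.
Qed.

Lemma expectile_gap_decr tau s t : 0 < tau < 1 -> s < t ->
  expectile_gap tau t < expectile_gap tau s.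
Proof.
move=> /andP[tau0 tau1] st.
have [dEpos dEneg dsum] := Epos_Eneg_increments (ltW st).
rewrite /expectile_gap; have [|] := ltrP 0 (Epos s - Epos t); nra.
Qed.

Lemma expectile_gap_lipschitz tau s t : 0 <= tau <= 1 ->
  `|expectile_gap tau s - expectile_gap tau t| <= `|s - t|.
Proof.
move=> /andP[tau0 tau1]; wlog st : s t / s <= t.
  move=> gap_lip; have /orP[/gap_lip //|/gap_lip] := le_total s t.
  by rewrite distrC [X in _ <= X]distrC.
have [dEpos dEneg dsum] := Epos_Eneg_increments st.
rewrite distrC (ler0_norm (_ : s - t <= 0)) ?subr_le0 // ler_norml /expectile_gap.
apply/andP; split; nra.
Qed.

Lemma expectile_gap_root tau : 0 < tau < 1 -> exists t, expectile_gap tau t = 0.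
Proof.
(* With c = pi+(mu) = pi-(mu), the gap is >= 0 at mu - c / tau and <= 0 at
   mu + c / (1 - tau). *)
move=> /andP[tau0 tau1]; set m := mean P X; set c := Epos m.
have Enegm : Eneg m = c by have := Epos_subEneg m; rewrite subrr /c; lra.
set l := m - c / tau; set u := m + c / (1 - tau).
have c0 : 0 <= c := Epos_ge0 m.
have l_le_m : l <= m by rewrite /l lerBlDr lerDl divr_ge0 // ltW.
have m_le_u : m <= u by rewrite /u lerDl divr_ge0 // subr_ge0 ltW.
have gap_l : 0 <= expectile_gap tau l.
  rewrite /expectile_gap; have -> : Epos l = Eneg l + c / tau.
    by have := Epos_subEneg l; rewrite -/m /l; lra.
  rewrite mulrDr mulrCA divff ?gt_eqF // mulr1.
  have := Eneg_nondecr l_le_m; have := Eneg_ge0 l; rewrite Enegm; nra.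
have gap_u : expectile_gap tau u <= 0.
  rewrite /expectile_gap; have -> : Eneg u = Epos u + c / (1 - tau).
    by have := Epos_subEneg u; rewrite -/m /u; lra.
  rewrite mulrDr mulrCA divff ?gt_eqF ?subr_gt0 // mulr1.
  have := Epos_nonincr m_le_u; have := Epos_ge0 u; rewrite -/c; nra.
have [||t _ gap_t0] := @IVT _ (expectile_gap tau) l u 0 (le_trans l_le_m m_le_u).
- apply/continuous_subspaceT/lipschitz1_continuous => s t.
  by apply: expectile_gap_lipschitz; rewrite !ltW.
- by rewrite ge_min le_max gap_l gap_u orbT.
- by exists t.
Qed.

Lemma expectileP tau : 0 < tau < 1 -> expectile_gap tau (expectile P X tau) = 0.
Proof.
move=> tau01; apply/expectile_eqP; apply: xgetPex.
by have [t /expectile_eqP] := expectile_gap_root tau01; exists t.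
Qed.

Lemma expectile_unique tau t : 0 < tau < 1 -> expectile_gap tau t = 0 ->
  expectile P X tau = t.
Proof.
move=> tau01 gap_t0; have gap_e0 := expectileP tau01.
have [/(expectile_gap_decr tau01)|/(expectile_gap_decr tau01)|//] :=
  ltgtP (expectile P X tau) t; lra.
Qed.

Lemma expectile_sub_mean tau (e := expectile P X tau) : 0 < tau < 1 ->
  (1 - tau) * (e - mean P X) = (2 * tau - 1) * Epos e /\
  tau * (e - mean P X) = (2 * tau - 1) * Eneg e.
Proof.
move=> tau01; have := expectileP tau01; have := Epos_subEneg e.
rewrite -/e /expectile_gap => ? ?; split; nra.
Qed.

Lemma expectile_Epos_Eneg_gt0 tau (e := expectile P X tau) :
  0 < tau < 1 -> rv_nondegenerate P X -> 0 < Epos e /\ 0 < Eneg e.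
Proof.
move=> /[dup] tau01 /andP[tau0 tau1] ndX.
have := expectileP tau01; have := Epos_addEneg_gt0 e ndX.
have := Epos_ge0 e; have := Eneg_ge0 e; rewrite -/e /expectile_gap.
split; nra.
Qed.

Lemma expectile_skew_bounds a : 0 < a < 1 / 2 -> rv_nondegenerate P X ->
  -1 + 2 * a < expectile_skew P X a < 1 - 2 * a.
Proof.
move=> /andP[a0 a_half] ndX.
have a01 : 0 < a < 1 by apply/andP; split; lra.
have a'01 : 0 < 1 - a < 1 by apply/andP; split; lra.
have a2_gt0 : 0 < 1 - 2 * a by lra.
have [Eposu_gt0 _] := expectile_Epos_Eneg_gt0 a'01 ndX.
have [_ Enegl_gt0] := expectile_Epos_Eneg_gt0 a01 ndX.
have [Eposu Enegu] := expectile_sub_mean a'01.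
have [Eposl Enegl] := expectile_sub_mean a01.
move: Eposu_gt0 Enegl_gt0 Eposu Enegu Eposl Enegl; rewrite /expectile_skew.
move: (expectile P X (1 - a)) (expectile P X a) (mean P X) => u l m.
move=> Eposu_gt0 Enegl_gt0 Eposu Enegu Eposl Enegl.
have ax : a * (u - m) = (1 - 2 * a) * Epos u by lra.
have a1x : (1 - a) * (u - m) = (1 - 2 * a) * Eneg u by lra.
have ay : a * (m - l) = (1 - 2 * a) * Eneg l by lra.
have a1y : (1 - a) * (m - l) = (1 - 2 * a) * Epos l by lra.
have um : m < u by rewrite -subr_gt0 -(pmulr_rgt0 _ a0) ax mulr_gt0.
have lm : l < m by rewrite -subr_gt0 -(pmulr_rgt0 _ a0) ay mulr_gt0.
have lu := lt_trans lm um.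
rewrite (_ : u + l - 2 * m = (u - m) - (m - l)); last by ring.
rewrite (_ : u - l = (u - m) + (m - l)); last by ring.
apply: skew_ratio_bounds; first by rewrite addr_gt0 // subr_gt0.
- by rewrite ax a1y (ltr_pM2l a2_gt0); exact: Epos_decr.
- by rewrite ay a1x (ltr_pM2l a2_gt0); exact: Eneg_incr.
Qed.

End partial_moments.

Definition bool01 {R : realType} (b : bool) : R := if b then 1 else 0.

Lemma measurable_bool01 {R : realType} : measurable_fun setT (@bool01 R).
Proof. by []. Qed.

HB.instance Definition _ (R : realType) :=
  isMeasurableFun.Build _ _ bool R bool01 measurable_bool01.

Section bernoulli_bool01.
Context (R : realType) (p : R).
Hypothesis p01 : 0 < p < 1.
Let P := bernoulli_prob p.
Let p01W : 0 <= p <= 1. Proof. by case/andP: p01 => p0 p1; rewrite !ltW. Qed.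

Let Rintegral_bernoulli (f : bool -> R) : (forall b, 0 <= f b) ->
  \int[P]_b f b = p * f true + (1 - p) * f false.
Proof.
by move=> f0; rewrite /Rintegral integral_bernoulli_prob // => b; rewrite lee_fin.
Qed.

Lemma integrable_bool01 : P.-integrable setT (EFin \o (@bool01 R)).
Proof.
apply: integrable_le (finite_measure_integrable_cst P 1 measurableT) => //.
by case; rewrite /bool01 /= ?normr1 ?normr0.
Qed.

Lemma nondegenerate_bool01 : rv_nondegenerate P (@bool01 R).
Proof.
move=> [c] Pc1.
have {Pc1} : bernoulli_prob p [set b | @bool01 R b = c] = 1%E := Pc1.
rewrite (bernoulli_probE p01W) !diracE -!EFinM -EFinD => -[].
rewrite /unstable.onem; have /andP[p0 p1] := p01.
case: (boolP (true \in _)) => [/set_mem/= c1|_];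
  case: (boolP (false \in _)) => [/set_mem/= c0|_];
  rewrite /= ?mulr1n ?mulr0n; lra.
Qed.

Lemma mean_bool01 : mean P bool01 = p.
Proof.
rewrite (_ : mean P bool01 = \int[P]_b bool01 b) // Rintegral_bernoulli.
  by rewrite /bool01 mulr1 mulr0 addr0.
by case; rewrite /bool01 ?ler01.
Qed.

Lemma Epos_bool01 t : 0 <= t <= 1 -> Epos P bool01 t = p * (1 - t).
Proof.
move=> /andP[t0 t1]; rewrite /Epos Rintegral_bernoulli => [|b]; last first.
  by rewrite le_max lexx orbT.
rewrite /bool01 (max_idPl _) ?subr_ge0 // (max_idPr _) ?sub0r ?oppr_le0 //.
by rewrite mulr0 addr0.
Qed.

Lemma Eneg_bool01 t : 0 <= t <= 1 -> Eneg P bool01 t = (1 - p) * t.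
Proof.
move=> /andP[t0 t1]; rewrite /Eneg Rintegral_bernoulli => [|b]; last first.
  by rewrite le_max lexx orbT.
rewrite /bool01 sub0r opprK (max_idPl t0) (max_idPr _) ?opprB ?subr_le0 //.
by rewrite mulr0 add0r.
Qed.

Lemma expectile_bool01 tau : 0 < tau < 1 ->
  expectile P bool01 tau = tau * p / (tau * p + (1 - tau) * (1 - p)).
Proof.
move=> /[dup] tau01 /andP[tau0 tau1]; have /andP[p0 p1] := p01.
have D0 : 0 < tau * p + (1 - tau) * (1 - p) by nra.
set t := _ / _.
have t01 : 0 <= t <= 1.
  by rewrite /t divr_ge0 ?ler_pdivrMr ?mul1r ?lerDl //=; nra.
apply: expectile_unique integrable_bool01 _ _ tau01 _.
rewrite /expectile_gap Epos_bool01 // Eneg_bool01 // /t.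
by field; rewrite gt_eqF.
Qed.

Lemma expectile_skew_bool01 a : 0 < a < 1 / 2 ->
  expectile_skew P bool01 a = (1 - 2 * a) * (1 - 2 * p).
Proof.
move=> /andP[a0 a_half]; have /andP[p0 p1] := p01.
rewrite /expectile_skew mean_bool01 !expectile_bool01; try (apply/andP; split; lra).
set Du := (1 - a) * p + (1 - (1 - a)) * (1 - p).
set Dl := a * p + (1 - a) * (1 - p).
have Du_gt0 : 0 < Du by rewrite /Du; nra.
have Dl_gt0 : 0 < Dl by rewrite /Dl; nra.
have gap : (1 - a) * p * Dl - a * p * Du = p * (1 - p) * (1 - 2 * a).
  by rewrite /Du /Dl; ring.
have gap_gt0 : 0 < p * (1 - p) * (1 - 2 * a) by rewrite !mulr_gt0 //; lra.
by rewrite /Du /Dl; field; rewrite !gt_eqF // -/Du -/Dl; nra.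
Qed.

End bernoulli_bool01.

Theorem mainTheorem2 (R : realType) (alpha : R) (ha0 : 0 < alpha) (ha1 : alpha < 1 / 2) :
  (forall (d : measure_display) (T : measurableType d) (P : probability T R)
          (X : {RV P >-> R}),
      integrable P setT (EFin \o X) -> rv_nondegenerate P X ->
      -1 + 2 * alpha < expectile_skew P X alpha < 1 - 2 * alpha)
  /\ (forall eps : R, 0 < eps ->
      exists (d : measure_display) (T : measurableType d) (P : probability T R)
             (X : {RV P >-> R}),
        [/\ integrable P setT (EFin \o X), rv_nondegenerate P X &
            1 - 2 * alpha - eps < expectile_skew P X alpha])
  /\ (forall eps : R, 0 < eps ->
      exists (d : measure_display) (T : measurableType d) (P : probability T R)
             (X : {RV P >-> R}),
        [/\ integrable P setT (EFin \o X), rv_nondegenerate P X &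
            expectile_skew P X alpha < -1 + 2 * alpha + eps]).
Proof.
have alpha_bnd : 0 < alpha < 1 / 2 by apply/andP.
have bernoulli_skew p : 0 < p < 1 ->
    exists (d : measure_display) (T : measurableType d) (P : probability T R)
           (X : {RV P >-> R}),
      [/\ integrable P setT (EFin \o X), rv_nondegenerate P X &
          expectile_skew P X alpha = (1 - 2 * alpha) * (1 - 2 * p)].
  move=> p01; exists _, _, (bernoulli_prob p), (@bool01 R).
  split; [exact: integrable_bool01 | exact: nondegenerate_bool01 |].
  exact: expectile_skew_bool01.
have small_p (eps : R) : 0 < eps -> exists p, 0 < p < 1 /\ 2 * p < eps.
  move=> eps0; exists (eps / (2 * (1 + eps))).
  have -> : 2 * (eps / (2 * (1 + eps))) = eps / (1 + eps).
    by field; rewrite gt_eqF //; lra.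
  rewrite !divr_gt0 ?ltr_pdivrMr ?mul1r ?ltr_pMr ?ltrDr //=; lra.
split; first by move=> d T P X X_int ndX; exact: expectile_skew_bounds.
split=> eps eps0; have [p [p01 p_eps]] := small_p eps eps0.
- have [d [T [P [X [X_int ndX skewX]]]]] := bernoulli_skew p p01.
  by exists d, T, P, X; split => //; rewrite skewX; nra.
- have [|d [T [P [X [X_int ndX skewX]]]]] := bernoulli_skew (1 - p).
    by move: p01 => /andP[p0 p1]; apply/andP; split; lra.
  by exists d, T, P, X; split => //; rewrite skewX; nra.
Qed.
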